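(* Let $n\geq 1$ and $m\geq 2$, and let $H_1$ and $H_2$ be the components of $R_t(T(2n+1,2m))$ containing $M_1=E_1\cup E_3\cup\cdots\cup E_{2m-1}$ and $M_2=E_2\cup E_4\cup\cdots\cup E_{2m}$ respectively. Then $H_1$ and $H_2$ are isomorphic.
   Context: $T(2n+1,2m)$ is the graph with vertices $(u_i,v_j)$, $i\in\mathbb{Z}_{2m}$, $j\in\mathbb{Z}_{2n+1}$, where $(u_i,v_j)$ is adjacent to $(u_{i+1},v_j)$ and $(u_i,v_{j+1})$, cellularly embedded in the torus with faces the $4$-cycles $(u_i,v_j)(u_{i+1},v_j)(u_{i+1},v_{j+1})(u_i,v_{j+1})$. For $1\le i\le 2m$, $E_i=\{(u_i,v_j)(u_{i+1},v_j):1\le j\le 2n+1\}$ (index mod $2m$). The total resonance graph $R_t(G)$ has the perfect matchings as vertices, two perfect matchings $M,M'$ being adjacent iff $M\oplus M'$ is exactly the boundary of one face. (These are distinct components, and they are the only two components.) *)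

From mathcomp Require Import all_boot.
Set Implicit Arguments. Unset Strict Implicit. Unset Printing Implicit Defensive.

(* Torus grid T(q, p): vertices (u_i, v_j), i in Z_p, j in Z_q (0-based).
   (u_i,v_j) ~ (u_{i+1},v_j)  ("u-edge", tag false)
   (u_i,v_j) ~ (u_i,v_{j+1})  ("v-edge", tag true).
   An edge is encoded by its "lower" endpoint and its direction.
   For p >= 3 and q >= 3 this encoding is a bijection with the edge set
   (no loops, no parallel edges). *)
Definition tvert (p q : nat) := ('I_p * 'I_q)%type.
Definition tedge (p q : nat) := (tvert p q * bool)%type.

Definition tends p q (e : tedge p q) : tvert p q * tvert p q :=
  let: ((i, j), d) := e in
  if d then ((i, j), (i, ordS j)) else ((i, j), (ordS i, j)).

Definition incident p q (x : tvert p q) (e : tedge p q) : bool :=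
  (x == (tends e).1) || (x == (tends e).2).

Definition perfect_matching p q (M : {set tedge p q}) : bool :=
  [forall x : tvert p q, #|[set e in M | incident x e]| == 1].

Definition face_boundary p q (f : tvert p q) : {set tedge p q} :=
  let: (i, j) := f in
  [set ((i, j), false); ((i, ordS j), false); ((i, j), true); ((ordS i, j), true)].

Definition symdiff (T : finType) (A B : {set T}) : {set T} := (A :\: B) :|: (B :\: A).

Definition rt_adj p q : rel {set tedge p q} := fun M M' =>
  [&& perfect_matching M, perfect_matching M' &
      [exists f : tvert p q, symdiff M M' == face_boundary f]].

Definition rt_component p q (M : {set tedge p q}) : {set {set tedge p q}} :=
  [set M' | perfect_matching M && connect (@rt_adj p q) M M'].

(* E_i = {(u_i,v_j)(u_{i+1},v_j) : j}, with 0-based index i *)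
Definition Elayer p q (i : 'I_p) : {set tedge p q} :=
  [set ((i, j), false) | j : 'I_q].

(* M_1 = E_1 ∪ E_3 ∪ ... (1-based) = union of layers with even 0-based index;
   M_2 = E_2 ∪ E_4 ∪ ... = odd 0-based index *)
Definition Mone p q : {set tedge p q} := \bigcup_(i : 'I_p | ~~ odd i) Elayer q i.
Definition Mtwo p q : {set tedge p q} := \bigcup_(i : 'I_p | odd i) Elayer q i.

Definition induced_iso (T : finType) (r : rel T) (V1 V2 : {set T}) : Prop :=
  exists f : T -> T,
    [/\ {in V1 &, injective f}, f @: V1 = V2 &
        {in V1 &, forall x y, r x y = r (f x) (f y)}].

From mathcomp Require Import all_boot.
Set Implicit Arguments. Unset Strict Implicit. Unset Printing Implicit Defensive.

(* The rotation u_i -> u_{i+1} of the even cycle direction is an automorphism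
   of the torus grid that preserves faces and sends the layer E_i onto
   E_{i+1}; as 2m is even it maps M_1 onto M_2.  Its action on edge sets is
   therefore an automorphism of R_t carrying the component of M_1 onto the
   component of M_2. *)

Lemma homo_connect (T T' : finType) (r : rel T) (r' : rel T') (f : T -> T') :
  {homo f : x y / r x y >-> r' x y} ->
  {homo f : x y / connect r x y >-> connect r' x y}.
Proof.
move=> f_homo x y /connectP [s r_s ->]; apply/connectP.
by exists (map f s); [exact: homo_path f_homo r_s | rewrite last_map].
Qed.

Lemma mono_connect (T : finType) (r : rel T) (h g : T -> T) :
  cancel h g -> cancel g h -> {mono h : x y / r x y} ->
  {mono h : x y / connect r x y}.
Proof.
move=> hK gK r_mono x y; apply/idP/idP.
  rewrite -{2}(hK x) -{2}(hK y); apply: homo_connect => a b r_ab.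
  by rewrite -r_mono !gK.
by apply: homo_connect => a b; rewrite r_mono.
Qed.

Lemma induced_iso_imset (T : finType) (r : rel T) (h : T -> T) (V : {set T}) :
  injective h -> {mono h : x y / r x y} -> induced_iso r V (h @: V).
Proof.
move=> h_inj r_mono; exists h.
by split=> [||x y _ _]; [exact: in2W | by [] | by rewrite r_mono].
Qed.

Section TorusShift.
Variables p q : nat.

Definition shift_vert (x : tvert p q) : tvert p q := (ordS x.1, x.2).
Definition unshift_vert (x : tvert p q) : tvert p q := (ord_pred x.1, x.2).
Definition shift_edge (e : tedge p q) : tedge p q := (shift_vert e.1, e.2).
Definition unshift_edge (e : tedge p q) : tedge p q := (unshift_vert e.1, e.2).
Definition shift_matching (M : {set tedge p q}) := shift_edge @: M.
Definition unshift_matching (M : {set tedge p q}) := unshift_edge @: M.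

Lemma shift_vertK : cancel shift_vert unshift_vert.
Proof. by case=> i j; rewrite /unshift_vert /= ordSK. Qed.

Lemma unshift_vertK : cancel unshift_vert shift_vert.
Proof. by case=> i j; rewrite /shift_vert /= ord_predK. Qed.

Lemma shift_edgeK : cancel shift_edge unshift_edge.
Proof. by case=> x d; rewrite /unshift_edge /= shift_vertK. Qed.

Lemma unshift_edgeK : cancel unshift_edge shift_edge.
Proof. by case=> x d; rewrite /shift_edge /= unshift_vertK. Qed.

Lemma shift_vert_inj : injective shift_vert.
Proof. exact: can_inj shift_vertK. Qed.

Lemma shift_edge_inj : injective shift_edge.
Proof. exact: can_inj shift_edgeK. Qed.

Lemma shift_matchingK : cancel shift_matching unshift_matching.
Proof.
move=> M; rewrite /unshift_matching -imset_comp.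
by rewrite (eq_imset _ shift_edgeK) imset_id.
Qed.

Lemma unshift_matchingK : cancel unshift_matching shift_matching.
Proof.
move=> M; rewrite /shift_matching -imset_comp.
by rewrite (eq_imset _ unshift_edgeK) imset_id.
Qed.

Lemma shift_matching_pre (M : {set tedge p q}) :
  shift_matching M = unshift_edge @^-1: M.
Proof. exact: can2_imset_pre shift_edgeK unshift_edgeK. Qed.

Lemma incident_shift x e :
  incident (shift_vert x) (shift_edge e) = incident x e.
Proof.
have tends_shift : tends (shift_edge e) =
    (shift_vert (tends e).1, shift_vert (tends e).2) by case: e => [[i j] []].
by rewrite /incident tends_shift !(inj_eq shift_vert_inj).
Qed.

Lemma incident_edges_shift (M : {set tedge p q}) x :
  [set e in shift_matching M | incident (shift_vert x) e] =
  shift_matching [set e in M | incident x e].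
Proof.
apply/setP => e; rewrite !shift_matching_pre !inE.
by rewrite -{2}(unshift_edgeK e) incident_shift.
Qed.

Lemma perfect_matching_shift (M : {set tedge p q}) :
  perfect_matching (shift_matching M) = perfect_matching M.
Proof.
have card_shift x : #|[set e in shift_matching M | incident (shift_vert x) e]|
    = #|[set e in M | incident x e]|.
  by rewrite incident_edges_shift card_imset //; exact: shift_edge_inj.
apply/forallP/forallP => M_pm x; first by rewrite -card_shift; exact: M_pm.
by rewrite -(unshift_vertK x) card_shift; exact: M_pm.
Qed.

Lemma symdiff_shift (A B : {set tedge p q}) :
  symdiff (shift_matching A) (shift_matching B) = shift_matching (symdiff A B).
Proof. by apply/setP => e; rewrite /symdiff !shift_matching_pre !inE. Qed.

Lemma face_boundary_shift (f : tvert p q) :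
  face_boundary (shift_vert f) = shift_matching (face_boundary f).
Proof.
by case: f => i j; rewrite /shift_matching /face_boundary /= !imsetU !imset_set1.
Qed.

Lemma rt_adj_shift : {mono shift_matching : M M' / rt_adj M M'}.
Proof.
move=> M M'; rewrite /rt_adj !perfect_matching_shift symdiff_shift.
congr [&& _, _ & _]; apply/existsP/existsP => -[f /eqP face_f].
  exists (unshift_vert f); apply/eqP; apply: (can_inj shift_matchingK).
  by rewrite -face_boundary_shift unshift_vertK.
by exists (shift_vert f); rewrite face_f face_boundary_shift.
Qed.

Lemma rt_component_shift (M : {set tedge p q}) :
  rt_component (shift_matching M) = shift_matching @: rt_component M.
Proof.
have connect_shift := mono_connect shift_matchingK unshift_matchingK rt_adj_shift.
apply/setP => M'; rewrite (can2_imset_pre _ shift_matchingK unshift_matchingK).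
by rewrite !inE perfect_matching_shift -[M' in LHS]unshift_matchingK connect_shift.
Qed.

Lemma mem_Elayers (P : pred 'I_p) (e : tedge p q) :
  (e \in \bigcup_(i : 'I_p | P i) Elayer q i) = ~~ e.2 && P e.1.1.
Proof.
case: e => [[i j] d] /=; apply/bigcupP/andP => [[k P_k /imsetP [j' _ [-> _ ->]]] //|].
by case: d => -[//= _ P_i]; exists i => //; apply/imsetP; exists j.
Qed.

Lemma odd_ordS (i : 'I_p) : ~~ odd p -> odd (ordS i) = ~~ odd i.
Proof.
move=> p_even /=; case: (ltngtP i.+1 p) => [i_lt | p_lt | i_last].
- by rewrite modn_small.
- by rewrite ltnNge ltn_ord in p_lt.
have odd_i : odd i by rewrite -[odd i]negbK -[~~ odd i]/(odd i.+1) i_last.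
by rewrite i_last modnn odd_i.
Qed.

Lemma shift_Mone : ~~ odd p -> shift_matching (Mone p q) = Mtwo p q.
Proof.
move=> p_even; apply/setP => e.
rewrite shift_matching_pre inE /Mone /Mtwo !mem_Elayers /=.
by rewrite -[in RHS](ord_predK e.1.1) odd_ordS // negbK.
Qed.

End TorusShift.

Theorem theorem4p4 (n m : nat) (hn : 1 <= n) (hm : 2 <= m) :
  induced_iso (@rt_adj (2 * m) (2 * n + 1))
    (rt_component (@Mone (2 * m) (2 * n + 1)))
    (rt_component (@Mtwo (2 * m) (2 * n + 1))).
Proof.
have p_even : ~~ odd (2 * m) by rewrite oddM.
rewrite -(shift_Mone _ p_even) rt_component_shift.
exact: induced_iso_imset (can_inj (@shift_matchingK _ _)) (@rt_adj_shift _ _).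
Qed.
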